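(* A connected block-cactus graph $G$ is $1$-perfectly orientable if and only if at most one block of $G$ is a cycle of length at least four.
   Context: All graphs are finite and simple. A graph is biconnected if it is connected with no cut vertex; a block is a maximal biconnected subgraph. A block-cactus graph is a graph each of whose blocks is either a cycle or a complete graph. An orientation of $G$ is $1$-perfect if for every vertex the out-neighborhood is a clique in $G$; $G$ is $1$-perfectly orientable if it has a $1$-perfect orientation. *)

From mathcomp Require Import all_boot.
Set Implicit Arguments. Unset Strict Implicit. Unset Printing Implicit Defensive.

(* A finite simple graph: vertex type T : finType, adjacency e : rel T,
   assumed symmetric and irreflexive in the theorem. *)

Section Graphs.
Variables (T : finType) (e : rel T).

Definition conn_in (S : {set T}) (x y : T) : bool :=
  connect [rel u v | [&& u \in S, v \in S & e u v]] x y.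

Definition connected_in (S : {set T}) : Prop :=
  S != set0 /\ forall x y, x \in S -> y \in S -> conn_in S x y.

(* v is a cut vertex of G[S]: removing it increases the number of
   components, i.e. separates two vertices that were joined in G[S] *)
Definition cut_vertex_in (S : {set T}) (v : T) : Prop :=
  v \in S /\ exists x y, [/\ x \in S :\ v, y \in S :\ v,
                            conn_in S x y & ~~ conn_in (S :\ v) x y].

Definition biconnected_in (S : {set T}) : Prop :=
  connected_in S /\ forall v, ~ cut_vertex_in S v.

Definition is_block (S : {set T}) : Prop :=
  biconnected_in S /\
  forall S' : {set T}, S \subset S' -> biconnected_in S' -> S' = S.

Definition is_cycle_in (S : {set T}) : Prop :=
  [/\ 3 <= #|S|, connected_in S &
      forall v, v \in S -> #|[set u in S | e v u]| = 2].

Definition is_complete_in (S : {set T}) : Prop :=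
  forall x y, x \in S -> y \in S -> x != y -> e x y.

Definition graph_connected : Prop := connected_in [set: T].

Definition block_cactus : Prop :=
  forall S, is_block S -> is_cycle_in S \/ is_complete_in S.

Definition is_orientation (o : rel T) : Prop :=
  (forall x y, o x y -> e x y) /\
  (forall x y, e x y -> (o x y && ~~ o y x) || (o y x && ~~ o x y)).

Definition one_perfect (o : rel T) : Prop :=
  is_orientation o /\
  forall v u w, o v u -> o v w -> u != w -> e u w.

Definition one_perfectly_orientable : Prop :=
  exists o : rel T, one_perfect o.

Definition long_cycle_block (S : {set T}) : Prop :=
  [/\ is_block S, is_cycle_in S & 4 <= #|S|].

Definition at_most_one_long_cycle_block : Prop :=
  forall S1 S2, long_cycle_block S1 -> long_cycle_block S2 -> S1 = S2.

End Graphs.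

From mathcomp Require Import all_boot zify.
From Stdlib Require Import Classical.
Set Implicit Arguments. Unset Strict Implicit. Unset Printing Implicit Defensive.

(* In a 1-perfect orientation two out-neighbours of a vertex are adjacent, so a
   vertex of a cycle block of length at least four has at most one out-neighbour
   in it; counting arcs, it has exactly one, and an out-neighbour outside the
   block would close an ear and enlarge the block.  Hence arcs leaving a long
   cycle block C1 stay in it, and by induction no arc increases the distance to
   C1.  Take b in a second long cycle block C2 closest to C1: if b is not in
   C1, the edge to a neighbour nearer to C1 is an arc either into C2 or away
   from C1, both impossible; so b is in C1 and its out-neighbour in C1 also lies
   in C2, and the two blocks share an edge.
   Conversely, orient the unique long cycle block (or a single vertex) cyclically
   and every other edge towards it, by distance.  The out-neighbours of a vertex
   v outside reach the core without passing through v, as does its parent p, so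
   they all lie in the block of the edge vp, which is a clique or a triangle. *)

Section BlockCactus.
Variables (T : finType) (e : rel T).
Hypothesis e_sym : symmetric e.
Hypothesis e_irr : irreflexive e.
Implicit Types S Q U B C : {set T}.

Definition edge_in (S : {set T}) : rel T := [rel u v | [&& u \in S, v \in S & e u v]].

Lemma conn_in_sym S x y : conn_in e S x y = conn_in e S y x.
Proof. by apply: sym_connect_sym => u v /=; rewrite e_sym andbCA. Qed.

Lemma conn_in_refl S x : conn_in e S x x.
Proof. exact: connect0. Qed.

Lemma conn_in_trans S x y z : conn_in e S x y -> conn_in e S y z -> conn_in e S x z.
Proof. exact: connect_trans. Qed.

Lemma conn_in_edge S x y : x \in S -> y \in S -> e x y -> conn_in e S x y.
Proof. by move=> xS yS exy; apply: connect1; rewrite /= xS yS. Qed.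

Lemma conn_in_sub S S' x y : S \subset S' -> conn_in e S x y -> conn_in e S' x y.
Proof.
move=> sSS'; apply: connect_sub => u v /and3P[uS vS euv].
by apply: conn_in_edge; rewrite ?(subsetP sSS').
Qed.

Lemma conn_in_hub S c :
  {in S, forall x, conn_in e S x c} -> {in S &, forall x y, conn_in e S x y}.
Proof.
by move=> Sc x y xS yS; apply: conn_in_trans (Sc x xS) _; rewrite conn_in_sym Sc.
Qed.

Lemma path_edge_in_sub S x p : path (edge_in S) x p -> x \in S -> {subset x :: p <= S}.
Proof.
elim: p x => [|y p IH] x /=; first by move=> _ xS z; rewrite inE => /eqP ->.
case/andP=> /and3P[_ yS _] pth xS z; rewrite inE => /orP[/eqP -> //|].
exact: IH.
Qed.

Lemma path_edge_in S x p : path (edge_in S) x p -> path e x p.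
Proof. by apply: sub_path => u v /and3P[]. Qed.

Lemma conn_in_mem S x y : x \in S -> conn_in e S x y -> y \in S.
Proof.
move=> xS /connectP[p pth ->].
by apply: (path_edge_in_sub pth xS); rewrite mem_last.
Qed.

Lemma conn_in_closed S Q x y :
  (forall a b, a \in Q -> b \in S -> e a b -> b \in Q) ->
  x \in Q -> conn_in e S x y -> y \in Q.
Proof.
move=> Qclosed xQ /connectP[p pth ->].
elim: p x xQ pth => [|z p IH] x xQ //= /andP[/and3P[_ zS exz] pth].
exact: IH (Qclosed _ _ xQ zS exz) pth.
Qed.

Lemma path_conn_in_last S a p : path e a p -> {subset a :: p <= S} ->
  {in a :: p, forall x, conn_in e S x (last a p)}.
Proof.
elim: p a => [|y p IH] a /=; first by move=> _ _ x; rewrite inE => /eqP ->; exact: conn_in_refl.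
move=> /andP[eay pth] sub x; rewrite inE => /orP[/eqP ->|xp].
  apply: (@conn_in_trans _ _ y); last by apply: IH; rewrite ?mem_head // => z zp; apply/sub/mem_behead.
  by apply: conn_in_edge; rewrite // sub ?mem_head // inE mem_head orbT.
by apply: IH xp => // z zp; apply/sub/mem_behead.
Qed.

Lemma path_conn_in_avoid S z a p : path e a p -> uniq (a :: p) -> {subset a :: p <= S} ->
  {in a :: p, forall x, x != z ->
    conn_in e (S :\ z) x a || conn_in e (S :\ z) x (last a p)}.
Proof.
elim: p a => [|y p IH] a /=.
  by move=> _ _ _ x; rewrite inE => /eqP -> _; rewrite conn_in_refl.
move=> /andP[eay pth] /andP[ayp un] sub x; rewrite inE => /orP[/eqP ->|xp] xz.
  by rewrite conn_in_refl.
have sub' : {subset y :: p <= S} by move=> w wp; apply/sub/mem_behead.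
have [az|az] := eqVneq a z.
  apply/orP; right; apply: path_conn_in_last xp => // w wp.
  by rewrite in_setD1 sub' // andbT; apply: contraNneq ayp => wz; rewrite az -wz.
have xSz : x \in S :\ z by rewrite in_setD1 xz sub'.
case/orP: (IH y pth un sub' x xp xz) => [cxy|->]; last by rewrite orbT.
apply/orP; left; apply: (conn_in_trans cxy); apply: conn_in_edge.
- exact: conn_in_mem xSz cxy.
- by rewrite in_setD1 az sub ?mem_head.
- by rewrite e_sym.
Qed.

Definition biconn S := [/\ S != set0, {in S &, forall x y, conn_in e S x y} &
  forall z, {in S :\ z &, forall x y, conn_in e (S :\ z) x y}].

Lemma biconnected_inP S : biconnected_in e S <-> biconn S.
Proof.
split=> [[[S0 Sconn] nocut]|[S0 Sconn Szconn]].
  split=> // z x y xSz ySz; have [zS|zNS] := boolP (z \in S).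
    apply/negPn/negP => ncon; apply: (nocut z); split=> //; exists x, y; split=> //.
    by apply: Sconn; [move: xSz | move: ySz]; rewrite in_setD1 => /andP[].
  have -> : S :\ z = S by apply/setP => u; rewrite in_setD1; case: eqP => // ->; rewrite (negbTE zNS).
  by apply: Sconn; [move: xSz | move: ySz]; rewrite in_setD1 => /andP[].
split=> [|v [_ [x [y [xSv ySv _]]]]]; first by split=> // x y; apply: Sconn.
by rewrite Szconn.
Qed.

Lemma biconn_sub_block S : biconn S -> exists2 B, is_block e B & S \subset B.
Proof.
have [n] := ubnP (#|T| - #|S|); elim: n S => // n IH S lt_n Sbic.
have [Sblock|notblock] := classic (is_block e S); first by exists S.
have [S' [sSS' S'bic neqS']] : exists S', [/\ S \subset S', biconn S' & S' <> S].
  apply: NNPP => none; apply: notblock; split=> [|S' sSS' /biconnected_inP S'bic].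
    exact/biconnected_inP.
  by apply: NNPP => neqS'; apply: none; exists S'.
have [|B Bblock sS'B] := IH S' _ S'bic; last by exists B => //; apply: subset_trans sS'B.
have : S \proper S' by rewrite properEneq sSS' andbT; apply/eqP => /esym.
by move/proper_card; have := max_card (pred_of_set S'); lia.
Qed.

Lemma biconn1 r : biconn [set r].
Proof.
split=> [|x y|z x y]; first by apply/set0Pn; exists r; rewrite inE.
  by rewrite !inE => /eqP-> /eqP->; exact: conn_in_refl.
by rewrite !in_setD1 !inE => /andP[_ /eqP->] /andP[_ /eqP->]; exact: conn_in_refl.
Qed.

Lemma biconn2 x y : e x y -> biconn [set x; y].
Proof.
move=> exy; have eyx : e y x by rewrite e_sym.
have pair_conn S : S \subset [set x; y] -> {in S &, forall u v, conn_in e S u v}.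
  move=> sub u v uS vS; have [->|uv] := eqVneq u v; first exact: conn_in_refl.
  apply: conn_in_edge => //; move: (subsetP sub u uS) (subsetP sub v vS) uv.
  by rewrite !inE => /orP[]/eqP-> /orP[]/eqP->; rewrite ?eqxx.
split=> [|//|z]; [by apply/set0Pn; exists x; rewrite !inE eqxx | exact: pair_conn |].
by apply: pair_conn; exact: subD1set.
Qed.

Lemma pair_avoid (a b z : T) : a != b -> exists2 c, c \in [set a; b] & c != z.
Proof.
move=> ab; have [az|az] := eqVneq a z; last by exists a; rewrite ?inE ?eqxx.
by exists b; rewrite ?inE ?eqxx ?orbT // -az eq_sym.
Qed.

Lemma biconn_grow S U a b : biconn S -> S \subset U -> a \in S -> b \in S -> a != b ->
  (forall z, {in U :\ z, forall x, exists2 t, t \in S & conn_in e (U :\ z) x t}) ->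
  biconn U.
Proof.
move=> [_ Sconn Szconn] sSU aS bS ab reachS.
have abS : [set a; b] \subset S by apply/subsetP => c; rewrite !inE => /orP[]/eqP->.
split.
- by apply/set0Pn; exists a; apply: (subsetP sSU).
- apply: (@conn_in_hub _ a) => x xU; have [z zab zx] := pair_avoid x ab.
  have xUz : x \in U :\ z by rewrite in_setD1 eq_sym zx.
  have [t tS cxt] := reachS z x xUz.
  exact: conn_in_trans (conn_in_sub (subD1set U z) cxt) (conn_in_sub sSU (Sconn t a tS aS)).
- move=> z; have [c cab cz] := pair_avoid z ab.
  have cSz : c \in S :\ z by rewrite in_setD1 cz (subsetP abS).
  apply: (@conn_in_hub _ c) => x xUz; have [t tS cxt] := reachS z x xUz.
  have tSz : t \in S :\ z.
    by rewrite in_setD1 tS andbT; move: (conn_in_mem xUz cxt); rewrite in_setD1 => /andP[].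
  exact: conn_in_trans cxt (conn_in_sub (setSD _ sSU) (Szconn z t c tSz cSz)).
Qed.

Lemma biconnU S1 S2 a b : biconn S1 -> biconn S2 ->
  a \in S1 :&: S2 -> b \in S1 :&: S2 -> a != b -> biconn (S1 :|: S2).
Proof.
move=> S1bic [_ _ S2zconn] /setIP[aS1 aS2] /setIP[bS1 bS2] ab.
apply: (biconn_grow S1bic (subsetUl S1 S2) aS1 bS1 ab) => z x.
rewrite in_setD1 in_setU => /andP[xz /orP[xS1|xS2]].
  by exists x => //; exact: conn_in_refl.
have [c cab cz] := pair_avoid z ab.
have [cS1 cS2] : c \in S1 /\ c \in S2 by move: cab; rewrite !inE => /orP[]/eqP->.
exists c => //; apply: conn_in_sub (setSD _ (subsetUr S1 S2)) (S2zconn z x c _ _).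
  by rewrite in_setD1 xz.
by rewrite in_setD1 cz.
Qed.

Lemma biconnU_path S a p : biconn S -> a \in S -> path e a p -> uniq (a :: p) ->
  last a p \in S -> a != last a p -> biconn (S :|: [set x in a :: p]).
Proof.
move=> Sbic aS pth un lastS a_last.
have subU : {subset a :: p <= S :|: [set x in a :: p]} by move=> x xp; rewrite in_setU in_set xp orbT.
apply: (biconn_grow Sbic (subsetUl _ _) aS lastS a_last) => z x.
rewrite in_setD1 in_setU in_set => /andP[xz /orP[xS|xp]].
  by exists x => //; exact: conn_in_refl.
by case/orP: (path_conn_in_avoid pth un subU xp xz) => ?; [exists a | exists (last a p)].
Qed.

Lemma eq_blocks B1 B2 a b : is_block e B1 -> is_block e B2 ->
  a \in B1 :&: B2 -> b \in B1 :&: B2 -> a != b -> B1 = B2.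
Proof.
move=> [/biconnected_inP B1bic B1max] [/biconnected_inP B2bic B2max] aB bB ab.
have /biconnected_inP Ubic := biconnU B1bic B2bic aB bB ab.
by rewrite -[LHS](B1max _ (subsetUl _ _) Ubic) (B2max _ (subsetUr _ _) Ubic).
Qed.

Lemma card_in_sum S (P : pred T) : #|[set y in S | P y]| = \sum_(y in S) P y.
Proof. by rewrite -sum1dep_card big_mkcondr; apply: eq_bigr => y _; case: (P y). Qed.

Lemma eq1_of_sum_card_ge1 S (f : T -> nat) : \sum_(x in S) f x = #|S| ->
  {in S, forall x, 0 < f x} -> {in S, forall x, f x = 1}.
Proof.
move=> sumf f_gt0 x xS.
have [_] := leqif_sum (fun (i : T) (iS : i \in S) => leqif_eq (f_gt0 i iS)).
by rewrite sum1_card sumf eqxx => /esym/forall_inP/(_ x xS)/eqP.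
Qed.

Lemma eq1_of_sum_card_le1 S (f : T -> nat) : \sum_(x in S) f x = #|S| ->
  {in S, forall x, f x <= 1} -> {in S, forall x, f x = 1}.
Proof.
move=> sumf f_le1 x xS.
have [_] := leqif_sum (fun (i : T) (iS : i \in S) => leqif_eq (f_le1 i iS)).
by rewrite sum1_card sumf eqxx => /esym/forall_inP/(_ x xS)/eqP.
Qed.

(* Every edge of [C] is counted once as an out-arc, and a 2-regular graph has as many edges as vertices. *)
Lemma sum_outdeg_2regular C (o : rel T) : (forall x y, o x y -> e x y) ->
  {in C &, forall x y, e x y -> o x y (+) o y x} ->
  {in C, forall x, #|[set y in C | e x y]| = 2} ->
  \sum_(x in C) #|[set y in C | o x y]| = #|C|.
Proof.
move=> oe o_xor deg.
have out_in : \sum_(x in C) #|[set y in C | o x y]| = \sum_(x in C) #|[set y in C | o y x]|.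
  by rewrite !(eq_bigr _ (fun x _ => card_in_sum _ _)); exact: exchange_big.
suff : \sum_(x in C) (#|[set y in C | o x y]| + #|[set y in C | o y x]|) = #|C|.*2.
  by rewrite big_split /= -out_in addnn => /double_inj.
rewrite -sum1_card -addnn -big_split /=; apply: eq_bigr => x xC.
rewrite !card_in_sum -big_split -[1 + 1]/2 -(deg x xC) card_in_sum.
apply: eq_bigr => y yC; case exy: (e x y).
  by move: (o_xor x y xC yC exy); case: (o x y); case: (o y x).
have eyx : e y x = false by rewrite e_sym.
by rewrite (negbTE (contraFN (@oe x y) exy)) (negbTE (contraFN (@oe y x) eyx)).
Qed.

Lemma neighbours_2regular C x y1 y2 : #|[set u in C | e x u]| = 2 -> y1 != y2 ->
  y1 \in [set u in C | e x u] -> y2 \in [set u in C | e x u] ->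
  [set y1; y2] = [set u in C | e x u].
Proof.
by move=> deg y12 y1N y2N; apply/eqP; rewrite eqEcard subUset !sub1set y1N y2N cards2 y12 deg.
Qed.

Lemma cycle3_complete C : is_cycle_in e C -> #|C| <= 3 -> is_complete_in e C.
Proof.
move=> [C3 _ deg] C_le3 x y xC yC xy.
have sub : [set u in C | e x u] \subset C :\ x.
  apply/subsetP => u; rewrite !inE => /andP[-> exu]; rewrite andbT.
  by apply: contraTneq exu => ->; rewrite e_irr.
have /subset_cardP/(_ sub)/(_ y) : #|[set u in C | e x u]| = #|C :\ x|.
  by rewrite deg; have := cardsD1 x C; rewrite xC; lia.
by rewrite !inE eq_sym xy yC => /esym.
Qed.

Lemma long_cycle_triangle_free C v u w : is_cycle_in e C -> 4 <= #|C| ->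
  v \in C -> u \in C -> w \in C -> e v u -> e v w -> e u w -> False.
Proof.
move=> [_ [_ Cconn] deg] C_ge4 vC uC wC evu evw euw.
set Q := [set v; u; w].
have NQ a b c : a \in C -> b \in C -> c \in C -> e a b -> e a c -> e b c ->
    b \in Q -> c \in Q -> [set y in C | e a y] \subset Q.
  move=> aC bC cC eab eac ebc bQ cQ; rewrite -(@neighbours_2regular C a b c) ?deg //.
  - by rewrite subUset !sub1set bQ cQ.
  - by apply: contraTneq ebc => ->; rewrite e_irr.
  - by rewrite inE bC.
  - by rewrite inE cC.
have [vQ uQ wQ] : [/\ v \in Q, u \in Q & w \in Q] by rewrite !inE !eqxx ?orbT.
have [euv ewv ewu] : [/\ e u v, e w v & e w u] by rewrite !(e_sym w) e_sym.
have Qclosed a b : a \in Q -> b \in C -> e a b -> b \in Q.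
  move=> aQ bC eab; apply: (subsetP (_ : [set y in C | e a y] \subset Q)).
    move: aQ; rewrite !inE => /orP[/orP[]|] /eqP->.
    - exact: NQ vC uC wC evu evw euw uQ wQ.
    - exact: NQ uC vC wC euv euw evw vQ wQ.
    - exact: NQ wC vC uC ewv ewu evu vQ uQ.
  by rewrite inE bC.
have : ~~ (C \subset Q) by apply/negP => /subset_leq_card; rewrite /Q -setUA cardsU1 cards2; lia.
case/subsetPn => z zC.
by rewrite (conn_in_closed Qclosed vQ (Cconn v z vC zC)).
Qed.

Lemma is_orientationE (o : rel T) : is_orientation e o <->
  (forall x y, o x y -> e x y) /\ (forall x y, e x y -> o x y (+) o y x).
Proof. by split=> -[oe ox]; split=> // x y /ox; case: (o x y); case: (o y x). Qed.

Fixpoint reach_in S B k x : bool :=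
  (x \in B) || if k is k'.+1 then [exists y, [&& y \in S, e x y & reach_in S B k' y]] else false.

Lemma exists_dist S B : {in S, forall x, exists2 b, b \in B & conn_in e S x b} ->
  exists d : T -> nat, [/\ {in S, forall x, (d x == 0) = (x \in B)},
    {in S &, forall x y, e x y -> d x <= (d y).+1} &
    {in S, forall x, x \notin B -> exists y, [/\ y \in S, e x y & (d y).+1 = d x]}].
Proof.
move=> SB.
have reach_path x p : path (edge_in S) x p -> last x p \in B -> reach_in S B (size p) x.
  elim: p x => [|y p IH] x /=; first by move=> _ ->.
  move=> /andP[/and3P[_ yS exy] pth] lastB; apply/orP; right; apply/existsP; exists y.
  by rewrite yS exy IH.
have reachable x : exists k, (x \notin S) || reach_in S B k x.
  have [xS|] := boolP (x \in S); last by exists 0.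
  have [b bB /connectP[p pth bE]] := SB x xS.
  by exists (size p); apply: reach_path pth _; rewrite -bE.
pose d x := ex_minn (reachable x).
have dP x : (x \notin S) || reach_in S B (d x) x by rewrite /d; case: ex_minnP.
have d_min x k : (x \notin S) || reach_in S B k x -> d x <= k.
  by rewrite /d; case: ex_minnP => m _; apply.
have d_edge : {in S &, forall x y, e x y -> d x <= (d y).+1}.
  move=> x y xS yS exy; apply: d_min; rewrite /= orbA orbC; apply/orP; left.
  by apply/existsP; exists y; rewrite yS exy /=; have := dP y; rewrite yS.
exists d; split=> // x xS.
  apply/idP/idP=> [/eqP d0|xB]; first by have := dP x; rewrite xS d0 /= orbF.
  by have := d_min x 0; rewrite /= xB orbT => /(_ isT); case: (d x).
move=> xNB; have := dP x; rewrite xS /=.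
case dx: (d x) => [|k] /=; first by rewrite (negbTE xNB).
rewrite (negbTE xNB) => /existsP[y /and3P[yS exy ry]].
exists y; split=> //; have := d_min y k; rewrite ry orbT => /(_ isT).
by have := d_edge x y xS yS exy; rewrite dx; lia.
Qed.

Lemma exists_dist_to B : graph_connected e -> B != set0 ->
  exists d : T -> nat, [/\ forall x, (d x == 0) = (x \in B),
    forall x y, e x y -> d x <= (d y).+1 &
    forall x, x \notin B -> exists y, e x y /\ (d y).+1 = d x].
Proof.
move=> [_ Gconn] /set0Pn[b bB].
have [|d [d0 d_edge d_parent]] := @exists_dist [set: T] B.
  by move=> x _; exists b; rewrite ?Gconn.
exists d; split=> [x|x y|x /(d_parent x (in_setT x))[y [_ exy dy]]]; last by exists y.
  exact: d0.
exact: d_edge.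
Qed.

Definition below (f : T -> nat) (y x : T) : bool :=
  (f y < f x) || ((f y == f x) && (enum_rank y < enum_rank x)).

Lemma below_leq f x y : below f y x -> f y <= f x.
Proof. by case/orP=> [/ltnW|/andP[/eqP-> _]]. Qed.

Lemma below_xor f x y : x != y -> below f x y (+) below f y x.
Proof.
move=> xy; rewrite /below.
have : enum_rank x != enum_rank y :> nat by apply: contra xy => /eqP/val_inj/enum_rank_inj->.
by case: ltngtP => //=; case: ltngtP.
Qed.

(* Cut the cycle at [c0] and direct every other vertex towards [c1] along the
   remaining path; closing it with [c1 -> c0 -> c2] leaves every out-degree positive. *)
Lemma cycle_block_orientation C : is_block e C -> is_cycle_in e C ->
  exists2 oC : rel T, {in C &, forall x y, e x y -> oC x y (+) oC y x}
                    & {in C & &, forall v u w, oC v u -> oC v w -> u = w}.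
Proof.
move=> [/biconnected_inP[_ _ Cz_conn] _] [_ [/set0Pn[c0 c0C] _] deg].
have /card_gt1P[c1 [c2 [/setIdP[c1C e01] /setIdP[c2C e02] c12]]] :
  1 < #|[set u in C | e c0 u]| by rewrite deg.
have c10 : c1 != c0 by apply: contraTneq e01 => ->; rewrite e_irr.
have N0 : [set c1; c2] = [set u in C | e c0 u].
  by apply: neighbours_2regular; rewrite ?deg // inE ?c1C ?c2C.
have c1Cz : c1 \in C :\ c0 by rewrite in_setD1 c10.
have [rho [_ _ rho_parent]] := @exists_dist (C :\ c0) [set c1]
  (fun x xCz => ex_intro2 _ _ c1 (set11 c1) (Cz_conn c0 x c1 xCz c1Cz)).
pose oC x y := e x y &&
  (if x == c0 then y == c2 else if y == c0 then x == c1 else below rho y x).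
have oC_xor : {in C &, forall x y, e x y -> oC x y (+) oC y x}.
  have c0_xor y : y \in [set u in C | e c0 u] -> (y == c2) (+) (y == c1).
    by rewrite -N0 !inE => /orP[]/eqP->; rewrite eqxx ?(negbTE c12) // eq_sym (negbTE c12).
  move=> x y xC yC exy; rewrite /oC exy (e_sym y x) exy /=.
  have [xc0|xc0] := eqVneq x c0; last have [yc0|yc0] := eqVneq y c0.
  - have yc0 : y != c0 by apply: contraTneq exy => ->; rewrite xc0 e_irr.
    by rewrite (negbTE yc0) c0_xor // inE yC -xc0.
  - by rewrite addbC c0_xor // inE xC -yc0 e_sym.
  - by rewrite below_xor //; apply: contraTneq exy => ->; rewrite e_irr.
have outdeg_pos : {in C, forall x, 0 < #|[set y in C | oC x y]|}.
  move=> x xC; apply/card_gt0P.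
  have [->|xc0] := eqVneq x c0; first by exists c2; rewrite inE c2C /oC e02 !eqxx.
  have [->|xc1] := eqVneq x c1.
    by exists c0; rewrite inE c0C /oC e_sym e01 (negbTE c10) !eqxx.
  have xCz : x \in C :\ c0 by rewrite in_setD1 xc0.
  have xNc1 : x \notin [set c1] by rewrite inE.
  have [y [/setD1P[yc0 yC] exy rho_y]] := rho_parent x xCz xNc1.
  by exists y; rewrite inE yC /oC exy (negbTE xc0) (negbTE yc0) /below -rho_y ltnSn.
have oC_edge x y : oC x y -> e x y by case/andP.
have outdeg1 := eq1_of_sum_card_ge1 (sum_outdeg_2regular oC_edge oC_xor deg) outdeg_pos.
exists oC => // v u w vC uC wC ovu ovw.
have /card_le1_eqP out_eq := eq_leq (outdeg1 v vC).
by apply/esym/out_eq; rewrite inE ?uC ?wC.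
Qed.

Section OnePerfect.
Variable o : rel T.
Hypothesis o_perf : one_perfect e o.

Let o_edge x y : o x y -> e x y.
Proof. by case: o_perf => /is_orientationE[oe _] _; exact: oe. Qed.

Let o_xor x y : e x y -> o x y (+) o y x.
Proof. by case: o_perf => /is_orientationE[_ ox] _; exact: ox. Qed.

Let o_clique v u w : o v u -> o v w -> u != w -> e u w.
Proof. by case: o_perf => _; exact. Qed.

Lemma outdeg_long_cycle_block C : long_cycle_block e C ->
  {in C, forall v, #|[set y in C | o v y]| = 1}.
Proof.
move=> [_ Ccycle C_ge4]; have [_ _ deg] := Ccycle.
apply: eq1_of_sum_card_le1; first by apply: sum_outdeg_2regular => // x y _ _; exact: o_xor.
move=> v vC; rewrite leqNgt; apply/negP => /card_gt1P[u [w [/setIdP[uC ovu] /setIdP[wC ovw] uw]]].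
exact: long_cycle_triangle_free Ccycle C_ge4 vC uC wC (o_edge ovu) (o_edge ovw) (o_clique ovu ovw uw).
Qed.

Lemma out_long_cycle_block C v w : long_cycle_block e C -> v \in C -> o v w -> w \in C.
Proof.
move=> Clong vC ovw; have [[/biconnected_inP Cbic Cmax] _ _] := Clong.
have /card_gt0P[u /setIdP[uC ovu]] : 0 < #|[set y in C | o v y]|.
  by rewrite (outdeg_long_cycle_block Clong vC).
apply: contraT => wNC.
have uw : u != w by apply: contraNneq wNC => <-.
have vu : v != u by apply: contraTneq (o_edge ovu) => ->; rewrite e_irr.
have vw : v != w by apply: contraNneq wNC => <-.
have := @biconnU_path C v [:: w; u] Cbic vC.
rewrite /= (o_edge ovw) e_sym (o_clique ovu ovw uw) /= !inE negb_or vw vu eq_sym uw uC.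
move=> /(_ isT isT isT isT) /biconnected_inP /Cmax E; move: wNC; rewrite -E ?subsetUl //.
by rewrite !inE eqxx !orbT.
Qed.

Section DistanceToLongCycle.
Variables (C : {set T}) (d : T -> nat).
Hypothesis C_long : long_cycle_block e C.
Hypothesis d0 : forall x, (d x == 0) = (x \in C).
Hypothesis d_edge : forall x y, e x y -> d x <= (d y).+1.
Hypothesis d_parent : forall x, x \notin C -> exists y, e x y /\ (d y).+1 = d x.

Lemma dist_arc_le x y : o x y -> d y <= d x.
Proof.
move: {2}(d x) (erefl (d x)) => n; elim: n x y => [|n IH] x y dx oxy.
  have xC : x \in C by rewrite -d0 dx.
  by have := d0 y; rewrite (out_long_cycle_block C_long xC oxy) => /eqP->.
have [|q [exq dq]] := @d_parent x; first by rewrite -d0 dx.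
have [oxq|nxq] := boolP (o x q).
  have [<-|qy] := eqVneq q y; first by rewrite -dq.
  by rewrite -dq; apply: d_edge; rewrite e_sym (o_clique oxq oxy qy).
have oqx : o q x by move: (o_xor exq); rewrite (negbTE nxq).
by have := IH q x ltac:(lia) oqx; lia.
Qed.

End DistanceToLongCycle.

Lemma one_perfect_at_most_one_long_cycle_block :
  graph_connected e -> at_most_one_long_cycle_block e.
Proof.
move=> Gconn C1 C2 C1long C2long.
have [[C1block _ _] [C2block _ _]] := (C1long, C2long).
have C_n0 C : long_cycle_block e C -> C != set0.
  by case=> _ _ C_ge4; rewrite -card_gt0; lia.
have [d [d0 d_edge d_parent]] := exists_dist_to Gconn (C_n0 _ C1long).
have /set0Pn[b2 b2C2] := C_n0 _ C2long.
have [b bC2 bmin] := arg_minnP d b2C2.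
have [bC1|bNC1] := boolP (b \in C1).
  have /card_gt0P[u /setIdP[uC1 obu]] : 0 < #|[set y in C1 | o b y]|.
    by rewrite (outdeg_long_cycle_block C1long bC1).
  apply: (eq_blocks (a := b) (b := u) C1block C2block); rewrite ?inE ?bC1 ?bC2 ?uC1 //.
    exact: out_long_cycle_block C2long bC2 obu.
  by apply: contraTneq (o_edge obu) => ->; rewrite e_irr.
have [p [ebp dp]] := d_parent b bNC1.
have [obp|nbp] := boolP (o b p).
  by have := bmin p (out_long_cycle_block C2long bC2 obp); lia.
have opb : o p b by move: (o_xor ebp); rewrite (negbTE nbp).
by have := dist_arc_le C1long d0 d_edge d_parent opb; lia.
Qed.

End OnePerfect.

Section TowardCore.
Variables (B0 : {set T}) (oB : rel T) (d : T -> nat).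
Hypothesis B0_conn : {in B0 &, forall x y, conn_in e B0 x y}.
Hypothesis oB_xor : {in B0 &, forall x y, e x y -> oB x y (+) oB y x}.
Hypothesis oB_func : {in B0 & &, forall v u w, oB v u -> oB v w -> u = w}.
Hypothesis d_parent : forall x, x \notin B0 -> exists y, e x y /\ (d y).+1 = d x.
Hypothesis B0_long : forall B, long_cycle_block e B -> B = B0.
Hypothesis G_cactus : block_cactus e.

Definition toward_core : rel T := fun x y => e x y &&
  if x \in B0 then (y \in B0) && oB x y else (y \in B0) || below d y x.

Lemma conn_descend_core x : exists2 b, b \in B0 & conn_in e (x |: [set z | d z < d x]) x b.
Proof.
move: {2}(d x) (erefl (d x)) => n; elim: n x => [|n IH] x dx;
  have [xB0|xN] := boolP (x \in B0); try by exists x => //; exact: conn_in_refl.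
  by have [y [_]] := d_parent xN; rewrite dx.
have [y [exy dy]] := d_parent xN.
have [b bB0 cyb] := IH y ltac:(lia); exists b => //.
have sub : y |: [set z | d z < d y] \subset x |: [set z | d z < d x].
  apply/subsetP => z; rewrite !inE -dy => /orP[/eqP->|lt_zy]; first by rewrite ltnSn orbT.
  by rewrite ltnW ?orbT.
apply: conn_in_trans (conn_in_sub sub cyb); apply: conn_in_edge exy; first by rewrite !inE eqxx.
by apply: (subsetP sub); rewrite !inE eqxx.
Qed.

Lemma conn_core_avoid v x : x != v -> (x \in B0) || (d x <= d v) ->
  exists2 b, b \in B0 & conn_in e [set~ v] x b.
Proof.
move=> xv /orP[xB0|le_xv]; first by exists x => //; exact: conn_in_refl.
have [b bB0 cxb] := conn_descend_core x; exists b => //; apply: conn_in_sub cxb.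
apply/subsetP => z; rewrite !inE => /orP[/eqP->|lt_zx] //.
by apply: contraTneq lt_zx => ->; rewrite -leqNgt.
Qed.

Lemma toward_core_parent_block v p x B : v \notin B0 -> e v p -> (d p).+1 = d v ->
  is_block e B -> v \in B -> p \in B -> toward_core v x -> x \in B.
Proof.
move=> vN evp dp Bblock vB pB /andP[evx]; rewrite (negbTE vN) => xfar.
have [->//|xp] := eqVneq x p.
have [vx vp] : v != x /\ v != p by split; [apply: contraTneq evx | apply: contraTneq evp];
  move=> ->; rewrite e_irr.
have [bx bxB0 cx] : exists2 b, b \in B0 & conn_in e [set~ v] x b.
  by apply: conn_core_avoid; rewrite 1?eq_sym //; case/orP: xfar => [->|/below_leq->]; rewrite ?orbT.
have [bp bpB0 cp] : exists2 b, b \in B0 & conn_in e [set~ v] p b.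
  by apply: conn_core_avoid; rewrite 1?eq_sym // -dp leqnSn orbT.
have B0v : B0 \subset [set~ v] by apply/subsetP => z zB0; rewrite !inE; apply: contraNneq vN => <-.
have /connectP[q pth pE] : conn_in e [set~ v] x p.
  apply: conn_in_trans cx (conn_in_trans (conn_in_sub B0v (B0_conn bxB0 bpB0)) _).
  by rewrite conn_in_sym.
case: (shortenP pth) pE => q' pth' uq' _ pE.
have xv' : x \in [set~ v] by rewrite !inE eq_sym.
have vNq : v \notin x :: q' by apply/negP => /(path_edge_in_sub pth' xv'); rewrite !inE eqxx.
have : biconn ([set v; p] :|: [set z in v :: x :: q']).
  apply: biconnU_path (biconn2 evp) (set21 v p) _ _ _ _.
  - by rewrite /= evx (path_edge_in pth').
  - by rewrite cons_uniq vNq uq'.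
  - by rewrite /= -pE set22.
  - by rewrite /= -pE.
case/biconn_sub_block => B' B'block sB'.
have [vB' pB' xB'] : [/\ v \in B', p \in B' & x \in B'].
  by split; apply: (subsetP sB'); rewrite !inE eqxx ?orbT.
by rewrite (eq_blocks (a := v) (b := p) Bblock B'block) // inE ?vB ?pB.
Qed.

Lemma toward_core_one_perfect : one_perfect e toward_core.
Proof.
split.
  apply/is_orientationE; split=> [x y /andP[] //|x y exy].
  rewrite /toward_core exy (e_sym y x) exy /=.
  have xy : x != y by apply: contraTneq exy => ->; rewrite e_irr.
  have [xB0|xN] := boolP (x \in B0); have [yB0|yN] := boolP (y \in B0) => //=.
    exact: oB_xor.
  by apply: below_xor; rewrite eq_sym.
move=> v u w ovu ovw uw.
have [vB0|vN] := boolP (v \in B0).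
  move: ovu ovw; rewrite /toward_core vB0 => /and3P[_ uB0 ovu] /and3P[_ wB0 ovw].
  by rewrite (oB_func vB0 uB0 wB0 ovu ovw) eqxx in uw.
have [p [evp dp]] := d_parent vN.
have [B Bblock sB] := biconn_sub_block (biconn2 evp).
have [vB pB] : v \in B /\ p \in B by split; apply: (subsetP sB); rewrite !inE eqxx ?orbT.
have uB := toward_core_parent_block vN evp dp Bblock vB pB ovu.
have wB := toward_core_parent_block vN evp dp Bblock vB pB ovw.
case: (G_cactus Bblock) => [Bcycle|Bcomplete]; last exact: Bcomplete.
have [B_ge4|B_le3] := ltnP 3 #|B|; last exact: cycle3_complete Bcycle B_le3 u w uB wB uw.
by move: vN; rewrite -(B0_long (And3 Bblock Bcycle B_ge4)) vB.
Qed.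

End TowardCore.

Lemma one_perfectly_orientable_of_one_long_cycle_block :
  graph_connected e -> block_cactus e -> at_most_one_long_cycle_block e ->
  one_perfectly_orientable e.
Proof.
move=> Gconn Gcactus one_long.
have [B0 [oB [B0_n0 B0_conn oB_xor oB_func B0_long]]] : exists B0 oB,
  [/\ B0 != set0, {in B0 &, forall x y, conn_in e B0 x y},
     {in B0 &, forall x y, e x y -> oB x y (+) oB y x},
     {in B0 & &, forall v u w, oB v u -> oB v w -> u = w} &
     forall B, long_cycle_block e B -> B = B0].
  have [[C [Cblock Ccycle C_ge4]]|no_long] := classic (exists C, long_cycle_block e C).
    have [oC oC_xor oC_func] := cycle_block_orientation Cblock Ccycle.
    have [_ [C_n0 C_conn] _] := Ccycle.
    by exists C, oC; split=> // B /one_long; apply.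
  have /set0Pn[r _] := Gconn.1; have [r_n0 r_conn _] := biconn1 r.
  exists [set r], (fun _ _ => false); split=> // [x y|B Blong]; last by case: no_long; exists B.
  by rewrite !inE => /eqP-> /eqP->; rewrite e_irr.
have [d [_ _ d_parent]] := exists_dist_to Gconn B0_n0.
by exists (toward_core B0 oB d); exact: toward_core_one_perfect.
Qed.

End BlockCactus.

Theorem corollary3p3 (T : finType) (e : rel T) :
  symmetric e -> irreflexive e ->
  graph_connected e -> block_cactus e ->
  (one_perfectly_orientable e <-> at_most_one_long_cycle_block e).
Proof.
move=> e_sym e_irr Gconn Gcactus; split=> [[o o_perf]|].
  exact: one_perfect_at_most_one_long_cycle_block o_perf Gconn.
exact: one_perfectly_orientable_of_one_long_cycle_block.
Qed.
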